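(* Consider the value iteration algorithm described in the context, producing functions $V^n$ for $n\ge0$. Then for every $n\ge 0$, every $s\in\mathcal{S}$ and every $k\in\{1,\dots,K-1\}$, $$V^{n}(s,k+1)-V^{n}(s,k)\ \le\ V^{n}(s,k)-V^{n}(s,k-1).$$
   Context: Model (token-based D2D transmission for one user). Let $\mathcal{S}=\{s_0,s_1,\dots,s_N\}$ be a finite set of traffic types, where $s_0$ denotes the idle state. Each $s\in\mathcal{S}$ has a probability $p(s)\in(0,1)$ with $\sum_{s\in\mathcal{S}}p(s)=1$. Each non-idle type $s\in\{s_1,\dots,s_N\}$ has a benefit $b_s$, with $0<b_{s_1}<\dots<b_{s_N}$. Fix an integer $K\ge1$, a cost $c>0$, parameters $p,q\in(0,1)$ and a discount factor $\beta\in(0,1)$. States are $(s,k)$ with $s\in\mathcal{S}$, $k\in\{0,\dots,K\}$; actions are $a\in\{0,1\}$. Transition probabilities $P\{(s',k')\mid(s,k),a\}$: for $s\ne s_0,k>0$: $p(s')\{(1-a)+a(1-q)\}$ if $k'=k$, $p(s')qa$ if $k'=k-1$; for $s\ne s_0,k=0$: $p(s')$ if $k'=0$; for $s=s_0,k<K$: $p(s')\{a+(1-a)(1-p)\}$ if $k'=k$, $p(s')p(1-a)$ if $k'=k+1$; for $s=s_0,k=K$: $p(s')$ if $k'=K$; otherwise $0$. Expected rewards: $\mu(s_0,k,a)=-cp(1-a)$ and, for $s\ne s_0$, $\mu(s,k,a)=q\,a\,b_s\,I(k>0)$. Value iteration: $V^0(s,k)=0$ for all $(s,k)$. Given $V^n$,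 define the policy $\pi^{n+1}$ by $\pi^{n+1}(s,0)=0$ for $s\ne s_0$, $\pi^{n+1}(s_0,K)=1$; for $s\ne s_0$ and $k\ge1$, $\pi^{n+1}(s,k)=0$ if $\beta\sum_{s'\in\mathcal{S}}p(s')\{V^n(s',k)-V^n(s',k-1)\}\ge b_s$ and $\pi^{n+1}(s,k)=1$ otherwise; for $k<K$, $\pi^{n+1}(s_0,k)=0$ if $\beta\sum_{s'\in\mathcal{S}}p(s')\{V^n(s',k+1)-V^n(s',k)\}\ge c$ and $\pi^{n+1}(s_0,k)=1$ otherwise. Then $V^{n+1}(s,k)=\mu(s,k,\pi^{n+1}(s,k))+\beta\sum_{(s',k')}P\{(s',k')\mid(s,k),\pi^{n+1}(s,k)\}V^n(s',k')$. *)

From mathcomp Require Import all_boot all_order all_algebra.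
Set Implicit Arguments. Unset Strict Implicit. Unset Printing Implicit Defensive.
Import Order.TTheory GRing.Theory Num.Theory.
Local Open Scope ring_scope.

(* Traffic types S = {s_0,...,s_N} are encoded as 'I_N.+1, with ord0 = s_0 the
   idle state.  Token levels k range over {0,...,K} (encoded as nat, k <= K). *)

Section Model.
Variables (R : realFieldType) (N K : nat).
Variables (ps : 'I_N.+1 -> R) (b : 'I_N.+1 -> R) (c p q beta : R).

Definition idle (s : 'I_N.+1) : bool := s == ord0.

Definition trans (s : 'I_N.+1) (k : nat) (a : bool) (s' : 'I_N.+1) (k' : nat) : R :=
  let ar : R := (a : nat)%:R in
  if ~~ idle s then
    if (0 < k)%N then
      if k' == k then ps s' * ((1 - ar) + ar * (1 - q))
      else if k' == k.-1 then ps s' * q * ar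
      else 0
    else (if k' == 0%N then ps s' else 0)
  else
    if (k < K)%N then
      if k' == k then ps s' * (ar + (1 - ar) * (1 - p))
      else if k' == k.+1 then ps s' * p * (1 - ar)
      else 0
    else (if k' == K then ps s' else 0).

Definition mu (s : 'I_N.+1) (k : nat) (a : bool) : R :=
  let ar : R := (a : nat)%:R in
  if idle s then - c * p * (1 - ar)
  else q * ar * b s * (if (0 < k)%N then 1 else 0).

Definition policy (V : 'I_N.+1 -> nat -> R) (s : 'I_N.+1) (k : nat) : bool :=
  if ~~ idle s then
    if k == 0%N then false
    else ~~ (beta * \sum_(s' < N.+1) ps s' * (V s' k - V s' k.-1) >= b s)
  else
    if k == K then true
    else ~~ (beta * \sum_(s' < N.+1) ps s' * (V s' k.+1 - V s' k) >= c).

Definition vi_step (V : 'I_N.+1 -> nat -> R) (s : 'I_N.+1) (k : nat) : R :=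
  let a := policy V s k in
  mu s k a + beta * \sum_(s' < N.+1) \sum_(k' < K.+1) trans s k a s' k' * V s' k'.

Fixpoint VI (n : nat) : 'I_N.+1 -> nat -> R :=
  match n with
  | 0%N => fun _ _ => 0
  | n'.+1 => vi_step (VI n')
  end.

End Model.

(* Write u_k = beta * sum_s' ps s' * V^n(s', k) and m_k = u_(k+1) - u_k for the
   discounted marginal value of a token.  As the policy picks the better action,
   V^(n+1)(s, k) = u_k + q (b_s - m_(k-1))^+ for a busy user with k > 0 and
   V^(n+1)(s, k) = u_k + p (m_k - c)^+ for an idle user with k < K, while
   V^(n+1)(s, k) = u_k at the levels k = 0 (busy) and k = K (idle).  A gain a t^+
   with 0 <= a <= 1 is nonnegative, monotone and 1-Lipschitz in t, which is exactly
   what keeps u + gain concave when u is.  Concavity of u is inherited from V^n by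
   averaging, so induction on n concludes. *)

From mathcomp Require Import all_boot all_order all_algebra.
From mathcomp Require Import ring lra.
Import Order.TTheory GRing.Theory Num.Theory.
Set Implicit Arguments.
Unset Strict Implicit.
Local Open Scope ring_scope.

Section OrdinalPick.
Variables (R : pzRingType) (K : nat).

Lemma sum_ord_pick1 (A : R) (W : nat -> R) j : (j <= K)%N ->
  \sum_(k < K.+1) (if k == j :> nat then A else 0) * W k = A * W j.
Proof.
move=> j_leK; rewrite (eq_bigr (fun k : 'I_K.+1 => if k == j :> nat then A * W k else 0)).
  by rewrite -big_mkcond (big_pred1 (Ordinal (j_leK : (j < K.+1)%N))).
by move=> k _; case: ifP; rewrite ?mul0r.
Qed.

Lemma sum_ord_pick2 (A B : R) (W : nat -> R) i j :
  (i <= K)%N -> (j <= K)%N -> j != i ->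
  \sum_(k < K.+1) (if k == i :> nat then A else if k == j :> nat then B else 0) * W k
  = A * W i + B * W j.
Proof.
move=> i_leK j_leK j_neq_i.
rewrite -(sum_ord_pick1 A W i_leK) -(sum_ord_pick1 B W j_leK) -big_split /=.
apply: eq_bigr => k _; have [->|_] := eqVneq (k : nat) i.
  by rewrite eq_sym (negPf j_neq_i) mul0r addr0.
by rewrite mul0r add0r.
Qed.

End OrdinalPick.

Section Hinge.
Variable R : realFieldType.

Definition hinge (a t : R) : R := a * Num.max 0 t.

Lemma hinge_ge0 a t : 0 <= a -> 0 <= hinge a t.
Proof. by move=> a_ge0; rewrite mulr_ge0 // le_max lexx. Qed.

Lemma ler_hinge a t t' : 0 <= a -> t <= t' -> hinge a t <= hinge a t'.
Proof. by rewrite /hinge => a_ge0 t_le; case: (lerP 0 t) => ?; case: (lerP 0 t') => ?; nra. Qed.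

Lemma hinge_lipschitz a t t' : 0 <= a <= 1 -> t <= t' -> hinge a t' - hinge a t <= t' - t.
Proof.
rewrite /hinge => /andP[a_ge0 a_le1] t_le.
by case: (lerP 0 t) => ?; case: (lerP 0 t') => ?; nra.
Qed.

End Hinge.

Section ValueIteration.
Variables (R : realFieldType) (N K : nat) (ps b : 'I_N.+1 -> R) (c p q beta : R).
Hypothesis ps_ge0 : forall s, 0 <= ps s.
Hypotheses (p01 : 0 <= p <= 1) (q01 : 0 <= q <= 1) (beta_ge0 : 0 <= beta).

Local Notation step := (@vi_step R N K ps b c p q beta).
Implicit Types (V : 'I_N.+1 -> nat -> R) (s : 'I_N.+1).

Definition mean V (k : nat) : R := \sum_(s < N.+1) ps s * V s k.

Definition marginal V (k : nat) : R := beta * (mean V k.+1 - mean V k).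

Definition concave_levels (f : nat -> R) : Prop :=
  forall k, (k.+1 < K)%N -> f k.+2 - f k.+1 <= f k.+1 - f k.

Lemma mean_sub V i j :
  \sum_(s < N.+1) ps s * (V s i - V s j) = mean V i - mean V j.
Proof. by rewrite /mean -sumrB; apply: eq_bigr => s _; rewrite mulrBr. Qed.

Lemma concave_mean V : (forall s, concave_levels (V s)) -> concave_levels (mean V).
Proof.
move=> V_concave k k_lt; rewrite -!mean_sub; apply: ler_sum => s _.
exact: (ler_wpM2l (ps_ge0 s) (V_concave s k k_lt)).
Qed.

Lemma marginal_succ_le V k : concave_levels (mean V) -> (k.+1 < K)%N ->
  marginal V k.+1 <= marginal V k.
Proof. by move=> mean_concave k_lt; exact: (ler_wpM2l beta_ge0 (mean_concave k k_lt)). Qed.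

Lemma sum_trans_busy V s k a : ~~ idle s -> (k < K)%N ->
  \sum_(s' < N.+1) \sum_(k' < K.+1) trans K ps p q s k.+1 a s' k' * V s' k'
  = mean V k.+1 - (a : nat)%:R * q * (mean V k.+1 - mean V k).
Proof.
move=> busy k_ltK; have k_leK : (k <= K)%N := ltnW k_ltK.
have k_neq_k1 : k != k.+1 by rewrite ltn_eqF.
rewrite /trans (negPf busy) /=.
under eq_bigr => s' _ do rewrite sum_ord_pick2 //.
by rewrite /mean -sumrB mulr_sumr -sumrB; apply: eq_bigr => s' _; ring.
Qed.

Lemma sum_trans_busy0 V s a : ~~ idle s ->
  \sum_(s' < N.+1) \sum_(k' < K.+1) trans K ps p q s 0 a s' k' * V s' k' = mean V 0.
Proof.
move=> busy; rewrite /trans (negPf busy) /=.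
by apply: eq_bigr => s' _; rewrite sum_ord_pick1.
Qed.

Lemma sum_trans_idle V s k a : idle s -> (k < K)%N ->
  \sum_(s' < N.+1) \sum_(k' < K.+1) trans K ps p q s k a s' k' * V s' k'
  = mean V k + (1 - (a : nat)%:R) * p * (mean V k.+1 - mean V k).
Proof.
move=> idle_s k_ltK; have k_leK : (k <= K)%N := ltnW k_ltK.
have k1_neq_k : k.+1 != k by rewrite gtn_eqF.
rewrite /trans idle_s k_ltK /=.
under eq_bigr => s' _ do rewrite sum_ord_pick2 //.
by rewrite /mean -sumrB mulr_sumr -big_split; apply: eq_bigr => s' _ /=; ring.
Qed.

Lemma sum_trans_idle_top V s a : idle s ->
  \sum_(s' < N.+1) \sum_(k' < K.+1) trans K ps p q s K a s' k' * V s' k' = mean V K.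
Proof.
move=> idle_s; rewrite /trans idle_s ltnn /=.
by apply: eq_bigr => s' _; rewrite sum_ord_pick1.
Qed.

Lemma vi_step_busy V s k : ~~ idle s -> (k < K)%N ->
  step V s k.+1 = beta * mean V k.+1 + hinge q (b s - marginal V k).
Proof.
move=> busy k_ltK.
rewrite /vi_step sum_trans_busy // /mu /policy (negPf busy) /= mean_sub -/(marginal V k).
case: (lerP (b s) (marginal V k)) => serve /=; rewrite /hinge.
  by rewrite max_l ?subr_le0 //; ring.
by rewrite max_r /marginal; [ring | rewrite subr_ge0 ltW].
Qed.

Lemma vi_step_busy0 V s : ~~ idle s -> step V s 0 = beta * mean V 0.
Proof.
by move=> busy; rewrite /vi_step sum_trans_busy0 // /mu /policy (negPf busy) /=; ring.
Qed.

Lemma vi_step_idle V s k : idle s -> (k < K)%N ->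
  step V s k = beta * mean V k + hinge p (marginal V k - c).
Proof.
move=> idle_s k_ltK.
rewrite /vi_step sum_trans_idle // /mu /policy idle_s (ltn_eqF k_ltK) /= mean_sub.
rewrite -/(marginal V k).
case: (lerP c (marginal V k)) => buy /=; rewrite /hinge.
  by rewrite max_r ?subr_ge0 // /marginal; ring.
by rewrite max_l; [ring | rewrite subr_le0 ltW].
Qed.

Lemma vi_step_idle_top V s : idle s -> step V s K = beta * mean V K.
Proof.
by move=> idle_s; rewrite /vi_step sum_trans_idle_top // /mu /policy idle_s eqxx /=; ring.
Qed.

Lemma concave_vi_step_busy V s : ~~ idle s -> concave_levels (mean V) ->
  concave_levels (step V s).
Proof.
move=> busy mean_concave k k1_ltK.
have q_ge0 : 0 <= q by case/andP: q01.
have k_ltK : (k < K)%N := ltnW k1_ltK.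
have lower : step V s k <= beta * mean V k + hinge q (b s - marginal V k).
  case: k k1_ltK k_ltK => [|k] k2_ltK k1_ltK.
    by rewrite vi_step_busy0 // lerDl hinge_ge0.
  rewrite (vi_step_busy V busy (ltnW k1_ltK)) lerD2l ler_hinge // lerB //.
  exact: marginal_succ_le.
have := hinge_lipschitz q01 (lerB (lexx (b s)) (marginal_succ_le mean_concave k1_ltK)).
rewrite (vi_step_busy V busy k1_ltK) (vi_step_busy V busy k_ltK).
by move: lower; rewrite /marginal; lra.
Qed.

Lemma concave_vi_step_idle V s : idle s -> concave_levels (mean V) ->
  concave_levels (step V s).
Proof.
move=> idle_s mean_concave k k1_ltK.
have p_ge0 : 0 <= p by case/andP: p01.
have upper : step V s k.+2 <= beta * mean V k.+2 + hinge p (marginal V k.+1 - c).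
  case: (ltnP k.+2 K) => [k2_ltK|k2_geK].
    rewrite vi_step_idle // lerD2l ler_hinge // lerB //.
    exact: marginal_succ_le.
  have -> : k.+2 = K by apply/eqP; rewrite eqn_leq k1_ltK k2_geK.
  by rewrite vi_step_idle_top // lerDl hinge_ge0.
have := hinge_lipschitz p01 (lerB (marginal_succ_le mean_concave k1_ltK) (lexx c)).
rewrite (vi_step_idle V idle_s k1_ltK) (vi_step_idle V idle_s (ltnW k1_ltK)).
by move: upper; rewrite /marginal; lra.
Qed.

Lemma concave_VI n s : concave_levels (@VI R N K ps b c p q beta n s).
Proof.
elim: n s => [|n IHn] s; first by move=> k _; rewrite /= !subrr.
have [idle_s|busy] := boolP (idle s).
  exact: concave_vi_step_idle (concave_mean IHn).
exact: concave_vi_step_busy (concave_mean IHn).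
Qed.

End ValueIteration.

Theorem theorem1 (R : realFieldType) (N K : nat)
  (ps : 'I_N.+1 -> R) (b : 'I_N.+1 -> R) (c p q beta : R)
  (hps : forall s, 0 < ps s < 1)
  (hsum : \sum_(s < N.+1) ps s = 1)
  (hb0 : forall s : 'I_N.+1, s != ord0 -> 0 < b s)
  (hbmono : forall s t : 'I_N.+1, s != ord0 -> (s < t)%N -> b s < b t)
  (hK : (1 <= K)%N) (hc : 0 < c)
  (hp : 0 < p < 1) (hq : 0 < q < 1) (hbeta : 0 < beta < 1) :
  forall (n : nat) (s : 'I_N.+1) (k : nat), (1 <= k)%N -> (k <= K.-1)%N ->
    @VI R N K ps b c p q beta n s k.+1 - @VI R N K ps b c p q beta n s k
      <= @VI R N K ps b c p q beta n s k - @VI R N K ps b c p q beta n s k.-1.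
Proof.
move=> n s [//|k] _ k_le.
have ps_ge0 s' : 0 <= ps s' by case/andP: (hps s') => /ltW.
have p01 : 0 <= p <= 1 by case/andP: hp => /ltW -> /ltW.
have q01 : 0 <= q <= 1 by case/andP: hq => /ltW -> /ltW.
have beta_ge0 : 0 <= beta by case/andP: hbeta => /ltW.
have k1_ltK : (k.+1 < K)%N by rewrite (leq_ltn_trans k_le) // ltn_predL.
exact: (concave_VI b c ps_ge0 p01 q01 beta_ge0 n s k1_ltK).
Qed.
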